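(* Let $\mathcal{N}$ be a nonsingular 2-step nilpotent Lie algebra over $\mathbb{R}$. If $\mathcal{N}$ satisfies the partial automatic continuity, then so does $\mathcal{N}\oplus\mathcal{N}$.
   Context: A 2-step nilpotent Lie algebra $\mathcal{N}$ with center $\mathfrak{z}$ is nonsingular if $\operatorname{ad}X:\mathcal{N}\to[\mathcal{N},\mathcal{N}]$ is surjective for every $X\in\mathcal{N}\setminus\mathfrak{z}$. A Lie ring automorphism is a bijective additive bracket-preserving map (not necessarily $\mathbb{R}$-linear); a central automorphism is a Lie ring automorphism $\mu$ with $\mu(x)-x$ central for all $x$. Field automorphisms: if a Lie algebra is a direct sum of ideals $\mathcal{N}_1\oplus\cdots\oplus\mathcal{N}_k$, for each $\mathcal{N}_i$ that is the realification of a complex Lie algebra choose a $\mathbb{C}$-basis $e_1,\dots,e_m$ and a field automorphism $\varphi$ of $\mathbb{C}$ fixing the structure constants and set $\sigma_i(\sum x_le_l)=\sum\varphi(x_l)e_l$, otherwise $\sigma_i=\mathrm{id}$; $\sigma_1\times\cdots\times\sigma_k$ is a field automorphism. A real nilpotent Lie algebra satisfies the partial automatic continuity if every Lie ring automorphism is a composition $\mu\circ\overline{f}\circ\sigma$ of a central automorphism, an $\mathbb{R}$-linear Lie algebra automorphism and a field automorphism. *)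

From HB Require Import structures.
From mathcomp Require Import all_boot all_order all_algebra.
From mathcomp Require Import reals.
From mathcomp Require Import complex.
Set Implicit Arguments. Unset Strict Implicit. Unset Printing Implicit Defensive.
Import Order.TTheory GRing.Theory Num.Theory.
Local Open Scope ring_scope.

Section Lie.
Variables (R : realType) (V : vectType R).
Implicit Types (br : V -> V -> V).

Definition lie_bracket br : Prop :=
  [/\ forall a x y z, br (a *: x + y) z = a *: br x z + br y z,
      forall a x y z, br x (a *: y + z) = a *: br x y + br x z,
      forall x, br x x = 0 &
      forall x y z, br x (br y z) + br y (br z x) + br z (br x y) = 0].

Definition central br (x : V) : Prop := forall y, br x y = 0.

(* [N,N] : the real span of all brackets (= the set of finite sums of
   brackets, by bilinearity) *)
Definition derived br (y : V) : Prop :=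
  exists s : seq (V * V), y = \sum_(p <- s) br p.1 p.2.

Definition two_step_nilpotent br : Prop :=
  (forall x y z, br x (br y z) = 0) /\ (exists x y, br x y != 0).

Definition nonsingular br : Prop :=
  forall X, ~ central br X -> forall y, derived br y -> exists z, br X z = y.

Definition lie_ring_aut br (f : V -> V) : Prop :=
  [/\ bijective f, forall x y, f (x + y) = f x + f y &
      forall x y, f (br x y) = br (f x) (f y)].

Definition central_aut br (mu : V -> V) : Prop :=
  lie_ring_aut br mu /\ forall x, central br (mu x - x).

Definition lie_alg_aut br (f : V -> V) : Prop :=
  lie_ring_aut br f /\ forall (a : R) x, f (a *: x) = a *: f x.

Definition cscale (J : V -> V) (z : R[i]) (v : V) : V :=
  (complex.Re z) *: v + (complex.Im z) *: J v.

(* N_i (an ideal) is the realification of a complex Lie algebra with complex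
   structure J, e : 'I_m -> V is a C-basis of N_i, phi is a field
   automorphism of C fixing the structure constants in this basis, and
   s(sum_l x_l e_l) = sum_l phi(x_l) e_l on N_i. *)
Definition complex_field_aut_on br (Ni : {vspace V}) (s : V -> V) : Prop :=
  exists (J : V -> V) (m : nat) (e : 'I_m -> V) (phi : {rmorphism R[i] -> R[i]}),
  [/\
      [/\ forall (a : R) x y, J (a *: x + y) = a *: J x + J y,
          forall x, x \in Ni -> J x \in Ni,
          forall x, x \in Ni -> J (J x) = - x &
          forall x y, x \in Ni -> y \in Ni -> br (J x) y = J (br x y)],
      [/\ forall l, e l \in Ni,
          forall v, v \in Ni -> exists c : 'I_m -> R[i],
                      v = \sum_(l < m) cscale J (c l) (e l) &
          forall c c' : 'I_m -> R[i],
            \sum_(l < m) cscale J (c l) (e l) = \sum_(l < m) cscale J (c' l) (e l) ->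
            forall l, c l = c' l],
      bijective phi,
      (exists a : 'I_m -> 'I_m -> 'I_m -> R[i],
         (forall p q, br (e p) (e q) = \sum_(l < m) cscale J (a p q l) (e l)) /\
         (forall p q l, phi (a p q l) = a p q l)) &
      forall c : 'I_m -> R[i],
        s (\sum_(l < m) cscale J (c l) (e l))
        = \sum_(l < m) cscale J (phi (c l)) (e l)].

Definition ideal br (U : {vspace V}) : Prop :=
  forall x y, x \in U -> br x y \in U.

Definition field_aut br (sigma : V -> V) : Prop :=
  exists (k : nat) (Ni : 'I_k -> {vspace V}) (s : 'I_k -> V -> V),
  [/\ forall i, ideal br (Ni i),
      directv (\sum_(i < k) Ni i)%VS,
      (\sum_(i < k) Ni i)%VS = fullv,
      forall i, (forall x, x \in Ni i -> s i x = x) \/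
                complex_field_aut_on br (Ni i) (s i) &
      forall v : 'I_k -> V, (forall i, v i \in Ni i) ->
        sigma (\sum_(i < k) v i) = \sum_(i < k) s i (v i)].

Definition partial_automatic_continuity br : Prop :=
  forall g, lie_ring_aut br g ->
    exists mu f sigma, [/\ central_aut br mu, lie_alg_aut br f,
                          field_aut br sigma &
                          forall x, g x = mu (f (sigma x))].

End Lie.

Definition prod_bracket (R : realType) (V : vectType R) (br : V -> V -> V)
  (x y : V * V) : V * V := (br x.1 y.1, br x.2 y.2).

From HB Require Import structures.
From mathcomp Require Import all_boot all_order all_algebra.
From mathcomp Require Import reals.
From mathcomp Require Import complex.
From Stdlib Require Import Classical.
Set Implicit Arguments. Unset Strict Implicit. Unset Printing Implicit Defensive.
Import Order.TTheory GRing.Theory Num.Theory.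
Local Open Scope ring_scope.

(* Fix x0, y0 with [x0, y0] <> 0.  For a Lie ring automorphism G of N (+) N,
   nonsingularity forces exactly one component of G (x0, 0) to be central;
   after composing with the swap we may assume it is the second one.  Then G
   maps N (+) 0 into N (+) Z and 0 (+) N into Z (+) N, Z the centre, so modulo
   Z it is a product a1 x a2 of additive bracket-preserving maps of N that are
   bijective modulo Z and on [N, N].  Correcting a_i on a projection onto Z
   that kills [N, N] gives Lie ring automorphisms k_i = a_i mod Z.  Partial
   automatic continuity of N gives k_i = f_i o s_i mod Z, and then
   G = mu o (f1 x f2) o (s1 x s2) with mu central and s1 x s2 a field
   automorphism of N (+) N for the product of the two decompositions. *)

Section AdditiveMaps.
Variables (U W : zmodType) (f : U -> W).
Hypothesis fD : forall x y, f (x + y) = f x + f y.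

Lemma additive0 : f 0 = 0.
Proof. by apply: (addrI (f 0)); rewrite -fD !addr0. Qed.

Lemma additiveN x : f (- x) = - f x.
Proof. by apply: (addrI (f x)); rewrite -fD !subrr additive0. Qed.

Lemma additiveB x y : f (x - y) = f x - f y.
Proof. by rewrite fD additiveN. Qed.

Lemma additive_inj : (forall x, f x = 0 -> x = 0) -> injective f.
Proof.
move=> f0 x y fxy; apply/eqP; rewrite -subr_eq0; apply/eqP/f0.
by rewrite additiveB fxy subrr.
Qed.

End AdditiveMaps.

Lemma inj_surj_bij (T : choiceType) (U : eqType) (f : T -> U) :
  injective f -> (forall y, exists x, f x = y) -> bijective f.
Proof.
move=> f_inj f_surj.
have ex_pre y : exists x, f x == y by have [x <-] := f_surj y; exists x.
exists (fun y => xchoose (ex_pre y)) => [x | y]; last exact/eqP/(xchooseP (ex_pre y)).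
by apply: f_inj; apply/eqP/(xchooseP (ex_pre (f x))).
Qed.

Lemma linfun_linear (R : realType) (U W : vectType R) (f : U -> W) :
  (forall (a : R) x y, f (a *: x + y) = a *: f x + f y) -> linfun f =1 f.
Proof.
move=> fL; pose F : {linear U -> W} := HB.pack f (GRing.isLinear.Build _ _ _ _ f fL).
exact: (lfunE F).
Qed.

Section Bracket.
Variables (R : realType) (V : vectType R) (br : V -> V -> V).
Hypothesis br_lie : lie_bracket br.

Lemma brDl x y z : br (x + y) z = br x z + br y z.
Proof. by case: br_lie => brL _ _ _; have := brL 1 x y z; rewrite !scale1r. Qed.

Lemma brDr x y z : br x (y + z) = br x y + br x z.
Proof. by case: br_lie => _ brR _ _; have := brR 1 x y z; rewrite !scale1r. Qed.

Lemma br0l z : br 0 z = 0.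
Proof. exact: (additive0 (fun x y => brDl x y z)). Qed.

Lemma br0r z : br z 0 = 0.
Proof. exact: (additive0 (brDr z)). Qed.

Lemma brNl x z : br (- x) z = - br x z.
Proof. exact: (additiveN (fun x y => brDl x y z)). Qed.

Lemma brNr x z : br z (- x) = - br z x.
Proof. exact: (additiveN (brDr z)). Qed.

Lemma brC x y : br x y = - br y x.
Proof.
case: br_lie => _ _ brxx _; apply/eqP; rewrite -addr_eq0; apply/eqP.
by have := brxx (x + y); rewrite brDl !brDr !brxx add0r addr0.
Qed.

Lemma central0 : central br 0.
Proof. exact: br0l. Qed.

Lemma centralD x y : central br x -> central br y -> central br (x + y).
Proof. by move=> cx cy z; rewrite brDl cx cy addr0. Qed.

Lemma centralN x : central br x -> central br (- x).
Proof. by move=> cx z; rewrite brNl cx oppr0. Qed.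

Lemma centralB x y : central br x -> central br y -> central br (x - y).
Proof. by move=> cx cy; apply/centralD/centralN. Qed.

Lemma br_centralr c : central br c -> forall x, br x c = 0.
Proof. by move=> cc x; rewrite brC cc oppr0. Qed.

Lemma derived_br x y : derived br (br x y).
Proof. by exists [:: (x, y)]; rewrite big_seq1. Qed.

Lemma derived_morph (f : V -> V) :
  (forall x y, f (x + y) = f x + f y) -> (forall x y, f (br x y) = br (f x) (f y)) ->
  forall d, derived br d -> derived br (f d).
Proof.
move=> fD fbr _ [s ->]; exists [seq (f p.1, f p.2) | p <- s].
by rewrite big_map (big_morph f fD (additive0 fD)); under eq_bigr do rewrite fbr.
Qed.

End Bracket.

Section CenterProjection.
Variables (R : realType) (V : vectType R) (br : V -> V -> V).
Hypothesis br_lie : lie_bracket br.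

Let brL a x y z : br (a *: x + y) z = a *: br x z + br y z.
Proof. by case: br_lie. Qed.

Let brR a x y z : br x (a *: y + z) = a *: br x y + br x z.
Proof. by case: br_lie. Qed.

Definition ad x : 'End(V) := linfun (br x).

Lemma adE x : ad x =1 br x.
Proof. by apply: linfun_linear => a y z; apply: brR. Qed.

Definition center_space : {vspace V} := lker (linfun ad).

Lemma mem_center_space x : x \in center_space <-> central br x.
Proof.
have adL a y z : ad (a *: y + z) = a *: ad y + ad z.
  by apply/lfunP => v; rewrite add_lfunE scale_lfunE !adE brL.
rewrite memv_ker (linfun_linear adL); split => [/eqP adx0 y | cx].
  by rewrite -adE adx0 zero_lfunE.
by apply/eqP/lfunP => y; rewrite adE cx zero_lfunE.
Qed.

Lemma mem_ad_img X0 y : y \in limg (ad X0) <-> exists z, br X0 z = y.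
Proof.
split => [/memv_imgP [z _ ->] | [z <-]]; first by exists z; rewrite adE.
by rewrite -adE memv_img ?memvf.
Qed.

Hypothesis br_nonsingular : nonsingular br.

(* By nonsingularity [N, N] is the subspace ad X0 (N), along which pi projects
   onto the centre. *)
Lemma exists_center_projection X0 : ~ central br X0 ->
  exists pi : V -> V, [/\ forall x y, pi (x + y) = pi x + pi y,
     forall x, pi (pi x) = pi x,
     forall d, derived br d -> pi d = 0,
     forall x, central br (pi x) &
     forall c, central br c -> derived br (c - pi c)].
Proof.
move=> ncX0; pose D := limg (ad X0); pose pi := addv_pi1 center_space D.
have pi_D d : d \in D -> pi d = 0.
  move=> Dd; have := addv_pi1_pi2 (subvP (addvSr center_space D) _ Dd).
  by rewrite addv_pi2_id // => /(canRL (addrK d)); rewrite subrr.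
exists pi; split => [x y | x | d | x | c].
- exact: linearD.
- exact: addv_pi1_proj.
- by move=> /(br_nonsingular ncX0) dX0; apply/pi_D/mem_ad_img.
- exact/mem_center_space/memv_pi1.
move=> /mem_center_space Zc.
have ZDc : c \in (center_space + D)%VS by rewrite (subvP (addvSl _ D)).
have -> : c - pi c = addv_pi2 center_space D c.
  by rewrite -{1}(addv_pi1_pi2 ZDc) addrC addKr.
by have /mem_ad_img [z <-] := memv_pi2 center_space D c; apply: derived_br.
Qed.

End CenterProjection.

Section CentralCorrection.
Variables (R : realType) (V : vectType R) (br : V -> V -> V).
Hypotheses (br_lie : lie_bracket br) (br_nonsingular : nonsingular br).
Variable X0 : V.
Hypothesis X0_not_central : ~ central br X0.

Variable al : V -> V.
Hypothesis alD : forall x y, al (x + y) = al x + al y.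
Hypothesis al_br : forall x y, al (br x y) = br (al x) (al y).
Hypothesis al_central : forall c, central br c -> central br (al c).
Hypothesis central_al : forall x, central br (al x) -> central br x.
Hypothesis al_surj_mod_center : forall y, exists x, central br (y - al x).
Hypothesis al_derived_inj : forall d, derived br d -> al d = 0 -> d = 0.
Hypothesis al_derived_surj :
  forall d, derived br d -> exists2 d', derived br d' & al d' = d.

Section WithProjection.
Variable pi : V -> V.
Hypothesis piD : forall x y, pi (x + y) = pi x + pi y.
Hypothesis pi_idem : forall x, pi (pi x) = pi x.
Hypothesis pi_derived : forall d, derived br d -> pi d = 0.
Hypothesis pi_central : forall x, central br (pi x).
Hypothesis pi_compl : forall c, central br c -> derived br (c - pi c).

Definition correction x := al (x - pi x) + pi x.

Lemma correctionD x y : correction (x + y) = correction x + correction y.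
Proof.
by rewrite /correction piD [RHS]addrACA -alD opprD [x + y + _]addrACA.
Qed.

Lemma central_sub_correction x : central br (al x - correction x).
Proof.
rewrite /correction (additiveB alD) opprD opprB addrA addrCA subrr addr0.
exact/(centralB br_lie)/pi_central/al_central/pi_central.
Qed.

Lemma correction_inj : injective correction.
Proof.
apply: (additive_inj correctionD) => x /eqP; rewrite addr_eq0 => /eqP al_x.
have Zx : central br (x - pi x).
  by apply: central_al; rewrite al_x; apply/(centralN br_lie)/pi_central.
have Dx : derived br (x - pi x).
  by have := pi_compl Zx; rewrite (additiveB piD) pi_idem subrr subr0.
have pix0 : pi x = 0.
  have := pi_derived (derived_morph alD al_br Dx).
  by rewrite al_x (additiveN piD) pi_idem => /eqP; rewrite oppr_eq0 => /eqP.
by have := al_derived_inj Dx; rewrite al_x pix0 oppr0 addr0; apply.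
Qed.

Lemma correction_surj y : exists x, correction x = y.
Proof.
have [x Zyx] := al_surj_mod_center y.
have Zc : central br (y - correction x).
  rewrite -(subrK (al x) y) -addrA.
  exact: (centralD br_lie) Zyx (central_sub_correction x).
have [d Dd al_d] := al_derived_surj (pi_compl Zc).
have corr_d : correction d = al d by rewrite /correction pi_derived // subr0 addr0.
have corr_pi : correction (pi (y - correction x)) = pi (y - correction x).
  by rewrite /correction pi_idem subrr (additive0 alD) add0r.
exists (x + d + pi (y - correction x)).
by rewrite !correctionD corr_d corr_pi al_d -addrA subrK addrC subrK.
Qed.

Lemma correction_br x y : correction (br x y) = br (correction x) (correction y).
Proof.
rewrite /correction (pi_derived (derived_br br x y)) subr0 addr0 al_br !(additiveB alD).
have Zp z := pi_central z; have Zap z := al_central (pi_central z).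
rewrite !(brDl br_lie) !(brDr br_lie) !(brNl br_lie) !(brNr br_lie) Zp Zap.
by rewrite !(br_centralr br_lie (Zp _)) !(br_centralr br_lie (Zap _)) !oppr0 !addr0.
Qed.

End WithProjection.

Lemma central_correction :
  exists2 k, lie_ring_aut br k & forall x, central br (al x - k x).
Proof.
have [pi [piD pi_idem pi_derived pi_central pi_compl]] :=
  exists_center_projection br_lie br_nonsingular X0_not_central.
exists (correction pi); last exact: central_sub_correction.
split; last exact: correction_br.
- exact: inj_surj_bij (correction_inj piD pi_idem pi_derived pi_central pi_compl)
                      (correction_surj piD pi_idem pi_derived pi_central pi_compl).
- exact: correctionD.
Qed.

End CentralCorrection.

Section Automorphisms.
Variables (R : realType) (V : vectType R) (br : V -> V -> V).
Implicit Types f g : V -> V.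

Lemma lie_ring_aut_inj f : lie_ring_aut br f -> injective f.
Proof. by case=> /bij_inj. Qed.

Lemma lie_ring_autD f : lie_ring_aut br f -> forall x y, f (x + y) = f x + f y.
Proof. by case. Qed.

Lemma lie_ring_aut0 f : lie_ring_aut br f -> f 0 = 0.
Proof. by move/lie_ring_autD/additive0. Qed.

Lemma lie_ring_aut_br f : lie_ring_aut br f -> forall x y, f (br x y) = br (f x) (f y).
Proof. by case. Qed.

Lemma lie_ring_aut_surj f : lie_ring_aut br f -> forall y, exists x, f x = y.
Proof. by case=> [[g _ gK]] _ _ y; exists (g y). Qed.

Lemma lie_ring_aut_comp f g :
  lie_ring_aut br f -> lie_ring_aut br g -> lie_ring_aut br (f \o g).
Proof.
case=> f_bij fD f_br [g_bij gD g_br]; split; first exact: bij_comp.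
  by move=> x y /=; rewrite gD fD.
by move=> x y /=; rewrite g_br f_br.
Qed.

Lemma lie_ring_aut_eq f g : f =1 g -> lie_ring_aut br f -> lie_ring_aut br g.
Proof.
move=> fg [f_bij fD f_br]; split; first exact: (eq_bij f_bij fg).
  by move=> x y; rewrite -!fg.
by move=> x y; rewrite -!fg.
Qed.

Lemma lie_ring_aut_inv f : lie_ring_aut br f ->
  exists g, [/\ lie_ring_aut br g, cancel f g & cancel g f].
Proof.
move=> f_aut; have [[g fK gK] fD f_br] := f_aut; exists g; split => //; split.
- by exists f.
- by move=> x y; apply: (lie_ring_aut_inj f_aut); rewrite fD !gK.
- by move=> x y; apply: (lie_ring_aut_inj f_aut); rewrite f_br !gK.
Qed.

Lemma lie_ring_aut_central f x :
  lie_ring_aut br f -> central br x -> central br (f x).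
Proof.
move=> f_aut cx y; have [z <-] := lie_ring_aut_surj f_aut y.
by rewrite -(lie_ring_aut_br f_aut) cx (lie_ring_aut0 f_aut).
Qed.

Lemma central_lie_ring_aut f x :
  lie_ring_aut br f -> central br (f x) -> central br x.
Proof.
move=> f_aut; have [g [g_aut fK _]] := lie_ring_aut_inv f_aut.
by move/(lie_ring_aut_central g_aut); rewrite fK.
Qed.

Lemma lie_alg_aut_comp f g :
  lie_alg_aut br f -> lie_alg_aut br g -> lie_alg_aut br (f \o g).
Proof.
case=> f_aut fZ [g_aut gZ]; split; first exact: lie_ring_aut_comp.
by move=> a x /=; rewrite gZ fZ.
Qed.

Definition pac_decomposable g := exists mu f sigma,
  [/\ central_aut br mu, lie_alg_aut br f, field_aut br sigma &
      forall x, g x = mu (f (sigma x))].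

Lemma pac_decomposable_mod_center g h f sigma :
  lie_ring_aut br g -> lie_ring_aut br h -> (forall x, central br (g x - h x)) ->
  lie_alg_aut br f -> field_aut br sigma -> (forall x, h x = f (sigma x)) ->
  pac_decomposable g.
Proof.
move=> g_aut h_aut Zgh f_aut sigma_aut hE.
have [hi [hi_aut hK hiK]] := lie_ring_aut_inv h_aut.
exists (g \o hi), f, sigma; split => // [|x]; last by rewrite /= -hE hK.
split; first exact: lie_ring_aut_comp.
by move=> x /=; have := Zgh (hi x); rewrite hiK.
Qed.

Lemma pac_mod_center k : partial_automatic_continuity br -> lie_ring_aut br k ->
  exists f sigma, [/\ lie_alg_aut br f, field_aut br sigma,
    lie_ring_aut br (f \o sigma) & forall x, central br (k x - f (sigma x))].
Proof.
move=> pac k_aut; have [mu [f [sigma [[mu_aut Zmu] f_aut sigma_aut kE]]]] := pac k k_aut.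
have [mi [mi_aut muK _]] := lie_ring_aut_inv mu_aut.
exists f, sigma; split => // [|x]; last by rewrite kE.
by apply: lie_ring_aut_eq (lie_ring_aut_comp mi_aut k_aut) => x /=; rewrite kE muK.
Qed.

End Automorphisms.

Section ImageOfComplexFieldAut.
Variables (R : realType) (V W : vectType R).
Variables (br : V -> V -> V) (bW : W -> W -> W).
Variables (io : {linear V -> W}) (ro : {linear W -> V}).
Hypothesis ioK : cancel io ro.
Hypothesis io_br : forall x y, bW (io x) (io y) = io (br x y).

Lemma mem_lin_img (U : {vspace V}) w :
  w \in (linfun io @: U)%VS <-> exists2 u, u \in U & w = io u.
Proof.
split => [/memv_imgP [u Uu ->] | [u Uu ->]]; first by exists u; rewrite ?lfunE.
by rewrite -lfunE memv_img.
Qed.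

Lemma complex_field_aut_on_img (Ni : {vspace V}) (s : V -> V) :
  complex_field_aut_on br Ni s ->
  complex_field_aut_on bW (linfun io @: Ni)%VS (io \o s \o ro).
Proof.
move=> [J [m [e [phi [[JL JNi JJ J_br] [eNi e_span e_free] phi_bij]]]]].
move=> [a [e_br phi_a]] sE.
pose J' := io \o J \o ro.
have cscale_io c x : cscale J' c (io x) = io (cscale J c x).
  by rewrite /cscale /J' /= ioK linearD !linearZ.
have sum_io (c : 'I_m -> R[i]) : \sum_(l < m) cscale J' (c l) (io (e l))
    = io (\sum_(l < m) cscale J (c l) (e l)).
  by rewrite linear_sum; apply: eq_bigr => l _; rewrite cscale_io.
exists J', m, (io \o e), phi; split => //.
- split => [r x y | _ /mem_lin_img [u Nu ->] | _ /mem_lin_img [u Nu ->] |].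
  + by rewrite /J' /= linearP JL linearP.
  + by apply/mem_lin_img; exists (J u); rewrite /J' /= ?ioK ?JNi.
  + by rewrite /J' /= !ioK JJ // linearN.
  move=> _ _ /mem_lin_img [u Nu ->] /mem_lin_img [v Nv ->].
  by rewrite /J' /= !io_br ioK J_br // ioK.
- split => [l | _ /mem_lin_img [u Nu ->] | c c'].
  + by apply/mem_lin_img; exists (e l).
  + by have [c ->] := e_span u Nu; exists c; rewrite sum_io.
  by rewrite /= !sum_io => /(can_inj ioK); apply: e_free.
- by exists a; split => // p q; rewrite /= io_br e_br sum_io.
- by move=> c; rewrite /= !sum_io /= ioK sE.
Qed.

End ImageOfComplexFieldAut.

Section JoinOrd.
Variables (A : Type) (k1 k2 : nat) (f : 'I_k1 -> A) (g : 'I_k2 -> A).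

Definition join_ord (i : 'I_(k1 + k2)) : A :=
  match split i with inl j => f j | inr j => g j end.

Lemma join_ord_lshift j : join_ord (lshift k2 j) = f j.
Proof. by rewrite /join_ord (unsplitK (inl j)). Qed.

Lemma join_ord_rshift j : join_ord (rshift k1 j) = g j.
Proof. by rewrite /join_ord (unsplitK (inr j)). Qed.

End JoinOrd.

Lemma sum_join_ord (A : nmodType) k1 k2 (f : 'I_k1 -> A) (g : 'I_k2 -> A) :
  \sum_(i < k1 + k2) join_ord f g i = \sum_(j < k1) f j + \sum_(j < k2) g j.
Proof.
rewrite big_split_ord /=.
by congr (_ + _); apply: eq_bigr => j _; rewrite ?join_ord_lshift ?join_ord_rshift.
Qed.

Definition prod_map (A B C D : Type) (f : A -> C) (g : B -> D) (p : A * B) : C * D :=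
  (f p.1, g p.2).

Lemma pair_split (U W : zmodType) (p : U * W) : p = (p.1, 0) + (0, p.2).
Proof. by apply: injective_projections; rewrite /= ?addr0 ?add0r. Qed.

Section ProductBracket.
Variables (R : realType) (V : vectType R) (br : V -> V -> V).
Hypothesis br_lie : lie_bracket br.
Local Notation pb := (prod_bracket br).
Implicit Types (p q : V * V) (f g : V -> V) (G : V * V -> V * V).

Lemma central_prod p : central pb p <-> central br p.1 /\ central br p.2.
Proof.
split => [Zp | [Z1 Z2] q]; last by rewrite /prod_bracket Z1 Z2.
by split => y; [have := congr1 fst (Zp (y, 0)) | have := congr1 snd (Zp (0, y))].
Qed.

Lemma prod_bracket_l x y : pb (x, 0) (y, 0) = (br x y, 0).
Proof. by rewrite /prod_bracket (br0l br_lie). Qed.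

Lemma prod_bracket_r x y : pb (0, x) (0, y) = (0, br x y).
Proof. by rewrite /prod_bracket (br0l br_lie). Qed.

Lemma prod_bracket_inl x p : pb (x, 0) p = (br x p.1, 0).
Proof. by rewrite /prod_bracket (br0l br_lie). Qed.

Lemma prod_bracket_inr x p : pb (0, x) p = (0, br x p.2).
Proof. by rewrite /prod_bracket (br0l br_lie). Qed.

Lemma lie_alg_aut_swap_pair : lie_alg_aut pb swap_pair.
Proof.
split=> [|a []//]; split=> [|[? ?] []//|[? ?] []//].
by exists swap_pair; apply: swap_pairK.
Qed.

Lemma lie_ring_aut_swap_pair : lie_ring_aut pb swap_pair.
Proof. by case: lie_alg_aut_swap_pair. Qed.

Lemma lie_ring_aut_swap_conj G :
  lie_ring_aut pb G -> lie_ring_aut pb (swap_pair \o G \o swap_pair).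
Proof.
by move=> G_aut; do 2?apply: lie_ring_aut_comp => //; apply: lie_ring_aut_swap_pair.
Qed.

Lemma lie_ring_aut_prod_map f g :
  lie_ring_aut br f -> lie_ring_aut br g -> lie_ring_aut pb (prod_map f g).
Proof.
move=> f_aut g_aut; have [fi [_ fK fiK]] := lie_ring_aut_inv f_aut.
have [gi [_ gK giK]] := lie_ring_aut_inv g_aut.
split=> [|[? ?] [? ?]|[? ?] [? ?]].
- by exists (prod_map fi gi) => -[x y]; rewrite /prod_map /= ?fK ?gK ?fiK ?giK.
- by rewrite /prod_map /= (lie_ring_autD f_aut) (lie_ring_autD g_aut).
- by rewrite /prod_map /= (lie_ring_aut_br f_aut) (lie_ring_aut_br g_aut).
Qed.

Lemma lie_alg_aut_prod_map f g :
  lie_alg_aut br f -> lie_alg_aut br g -> lie_alg_aut pb (prod_map f g).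
Proof.
case=> f_aut fZ [g_aut gZ]; split; first exact: lie_ring_aut_prod_map.
by move=> a [x y]; rewrite /prod_map /= fZ gZ.
Qed.

Lemma pac_decomposable_swap G :
  pac_decomposable pb (swap_pair \o G) -> pac_decomposable pb G.
Proof.
move=> [mu [f [sigma [[mu_aut Zmu] f_aut sigma_aut GE]]]].
exists (swap_pair \o mu \o swap_pair), (swap_pair \o f), sigma; split => //.
- split=> [|x]; first exact: lie_ring_aut_swap_conj.
  have /central_prod [Z1 Z2] := Zmu (swap_pair x).
  by apply/central_prod; split; rewrite /= ?swap_pairK.
- exact: lie_alg_aut_comp lie_alg_aut_swap_pair f_aut.
- by move=> x; rewrite /= swap_pairK -GE /= swap_pairK.
Qed.

End ProductBracket.

Section ProductFieldAut.
Variables (R : realType) (V : vectType R) (br : V -> V -> V).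
Hypothesis br_lie : lie_bracket br.
Local Notation pb := (prod_bracket br).

Definition inl_pair (x : V) : V * V := (x, 0).
Definition inr_pair (x : V) : V * V := (0, x).

Lemma inl_pair_linear : linear inl_pair.
Proof. by move=> a x y; apply: injective_projections; rewrite /= ?scaler0 ?addr0. Qed.
HB.instance Definition _ := GRing.isLinear.Build _ _ _ _ inl_pair inl_pair_linear.

Lemma inr_pair_linear : linear inr_pair.
Proof. by move=> a x y; apply: injective_projections; rewrite /= ?scaler0 ?addr0. Qed.
HB.instance Definition _ := GRing.isLinear.Build _ _ _ _ inr_pair inr_pair_linear.

Lemma ideal_inl_img U : ideal br U -> ideal pb (linfun inl_pair @: U)%VS.
Proof.
move=> U_ideal _ y /mem_lin_img [u Uu ->]; apply/mem_lin_img.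
by exists (br u y.1); rewrite ?U_ideal // /prod_bracket (br0l br_lie).
Qed.

Lemma ideal_inr_img U : ideal br U -> ideal pb (linfun inr_pair @: U)%VS.
Proof.
move=> U_ideal _ y /mem_lin_img [u Uu ->]; apply/mem_lin_img.
by exists (br u y.2); rewrite ?U_ideal // /prod_bracket (br0l br_lie).
Qed.

Variables (k1 k2 : nat) (N1 : 'I_k1 -> {vspace V}) (N2 : 'I_k2 -> {vspace V}).
Variables (s1 : 'I_k1 -> V -> V) (s2 : 'I_k2 -> V -> V).

Definition prod_ideal : 'I_(k1 + k2) -> {vspace V * V} :=
  join_ord (fun j => linfun inl_pair @: N1 j)%VS (fun j => linfun inr_pair @: N2 j)%VS.

Definition prod_part : 'I_(k1 + k2) -> V * V -> V * V :=
  join_ord (fun j => inl_pair \o s1 j \o fst) (fun j => inr_pair \o s2 j \o snd).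

Lemma mem_prod_ideal_lshift j p :
  p \in prod_ideal (lshift k2 j) <-> exists2 u, u \in N1 j & p = (u, 0).
Proof. by rewrite /prod_ideal join_ord_lshift; apply: mem_lin_img. Qed.

Lemma mem_prod_ideal_rshift j p :
  p \in prod_ideal (rshift k1 j) <-> exists2 u, u \in N2 j & p = (0, u).
Proof. by rewrite /prod_ideal join_ord_rshift; apply: mem_lin_img. Qed.

Section Family.
Variable v : 'I_(k1 + k2) -> V * V.
Hypothesis v_in : forall i, v i \in prod_ideal i.

Lemma prod_ideal_lshiftE j : v (lshift k2 j) = ((v (lshift k2 j)).1, 0).
Proof. by have /mem_prod_ideal_lshift [u _ ->] := v_in (lshift k2 j). Qed.

Lemma prod_ideal_rshiftE j : v (rshift k1 j) = (0, (v (rshift k1 j)).2).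
Proof. by have /mem_prod_ideal_rshift [u _ ->] := v_in (rshift k1 j). Qed.

Lemma prod_ideal_lshift_in j : (v (lshift k2 j)).1 \in N1 j.
Proof. by have /mem_prod_ideal_lshift [u Nu ->] := v_in (lshift k2 j). Qed.

Lemma prod_ideal_rshift_in j : (v (rshift k1 j)).2 \in N2 j.
Proof. by have /mem_prod_ideal_rshift [u Nu ->] := v_in (rshift k1 j). Qed.

Lemma sum_prod_ideal :
  \sum_i v i = (\sum_j (v (lshift k2 j)).1, \sum_j (v (rshift k1 j)).2).
Proof.
rewrite big_split_ord /= (eq_bigr _ (fun j _ => prod_ideal_lshiftE j)).
rewrite (eq_bigr _ (fun j _ => prod_ideal_rshiftE j)).
apply: injective_projections => /=.
  by rewrite !(raddf_sum fst) /= big1_eq addr0.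
by rewrite !(raddf_sum snd) /= big1_eq add0r.
Qed.

End Family.

Lemma ideal_prod_ideal :
  (forall j, ideal br (N1 j)) -> (forall j, ideal br (N2 j)) ->
  forall i, ideal pb (prod_ideal i).
Proof.
move=> N1_ideal N2_ideal i; rewrite /prod_ideal /join_ord.
by case: (split i) => j; [apply/ideal_inl_img | apply/ideal_inr_img].
Qed.

Lemma directv_prod_ideal :
  directv (\sum_(j < k1) N1 j) -> directv (\sum_(j < k2) N2 j) ->
  directv (\sum_(i < k1 + k2) prod_ideal i).
Proof.
move=> /directv_sum_independent N1_dir /directv_sum_independent N2_dir.
apply/directv_sum_independent => v v_in v0 i _.
have {}v_in i' : v i' \in prod_ideal i' by apply: v_in.
move: v0; rewrite (sum_prod_ideal v_in) => -[/N1_dir v1 /N2_dir v2].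
rewrite -(splitK i); case: (split i) => j /=.
  by rewrite prod_ideal_lshiftE // v1 // => j' _; apply: prod_ideal_lshift_in.
by rewrite prod_ideal_rshiftE // v2 // => j' _; apply: prod_ideal_rshift_in.
Qed.

Lemma prod_ideal_full :
  (\sum_(j < k1) N1 j)%VS = fullv -> (\sum_(j < k2) N2 j)%VS = fullv ->
  (\sum_(i < k1 + k2) prod_ideal i)%VS = fullv.
Proof.
move=> N1_full N2_full; apply/vspaceP => -[x y]; rewrite memvf.
have /memv_sumP [u1 u1_in ->] : x \in (\sum_(j < k1) N1 j)%VS by rewrite N1_full memvf.
have /memv_sumP [u2 u2_in ->] : y \in (\sum_(j < k2) N2 j)%VS by rewrite N2_full memvf.
apply/memv_sumP; exists (join_ord (inl_pair \o u1) (inr_pair \o u2)).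
  move=> i _; rewrite /prod_ideal /join_ord.
  by case: (split i) => j; apply/mem_lin_img;
    [exists (u1 j); rewrite ?u1_in | exists (u2 j); rewrite ?u2_in].
rewrite sum_join_ord -!linear_sum /=.
by apply: injective_projections; rewrite /= ?addr0 ?add0r.
Qed.

Lemma prod_part_field :
  (forall j, (forall x, x \in N1 j -> s1 j x = x) \/
             complex_field_aut_on br (N1 j) (s1 j)) ->
  (forall j, (forall x, x \in N2 j -> s2 j x = x) \/
             complex_field_aut_on br (N2 j) (s2 j)) ->
  forall i, (forall p, p \in prod_ideal i -> prod_part i p = p) \/
            complex_field_aut_on pb (prod_ideal i) (prod_part i).
Proof.
have inl_br x y : pb (inl_pair x) (inl_pair y) = inl_pair (br x y).
  by rewrite /prod_bracket (br0l br_lie).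
have inr_br x y : pb (inr_pair x) (inr_pair y) = inr_pair (br x y).
  by rewrite /prod_bracket (br0l br_lie).
move=> s1_field s2_field i; rewrite /prod_ideal /prod_part /join_ord.
case: (split i) => j.
  case: (s1_field j) => [s1_id | s1_cx]; [left | right].
    by move=> _ /mem_lin_img [u Nu ->]; rewrite /= s1_id.
  exact: (complex_field_aut_on_img (io := inl_pair) (ro := fst) (fun=> erefl) inl_br s1_cx).
case: (s2_field j) => [s2_id | s2_cx]; [left | right].
  by move=> _ /mem_lin_img [u Nu ->]; rewrite /= s2_id.
exact: (complex_field_aut_on_img (io := inr_pair) (ro := snd) (fun=> erefl) inr_br s2_cx).
Qed.

Lemma sum_prod_part (sigma1 sigma2 : V -> V) :
  (forall v, (forall j, v j \in N1 j) -> sigma1 (\sum_(j < k1) v j) = \sum_j s1 j (v j)) ->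
  (forall v, (forall j, v j \in N2 j) -> sigma2 (\sum_(j < k2) v j) = \sum_j s2 j (v j)) ->
  forall v, (forall i, v i \in prod_ideal i) ->
  prod_map sigma1 sigma2 (\sum_i v i) = \sum_i prod_part i (v i).
Proof.
move=> sigma1E sigma2E v v_in.
rewrite (sum_prod_ideal v_in) /prod_map /=.
rewrite sigma1E => [|j]; last exact: prod_ideal_lshift_in.
rewrite sigma2E => [|j]; last exact: prod_ideal_rshift_in.
rewrite big_split_ord /=.
rewrite (eq_bigr (fun j => inl_pair (s1 j (v (lshift k2 j)).1))) => [|j _].
  rewrite (eq_bigr (fun j => inr_pair (s2 j (v (rshift k1 j)).2))) => [|j _].
    rewrite -!linear_sum /=.
    by apply: injective_projections; rewrite /= ?addr0 ?add0r.
  by rewrite /prod_part join_ord_rshift.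
by rewrite /prod_part join_ord_lshift.
Qed.

End ProductFieldAut.

Lemma field_aut_prod_map (R : realType) (V : vectType R) (br : V -> V -> V) sigma1 sigma2 :
  lie_bracket br -> field_aut br sigma1 -> field_aut br sigma2 ->
  field_aut (prod_bracket br) (prod_map sigma1 sigma2).
Proof.
move=> br_lie [k1 [N1 [s1 [ideal1 dir1 full1 field1 sigma1E]]]].
move=> [k2 [N2 [s2 [ideal2 dir2 full2 field2 sigma2E]]]].
exists (k1 + k2), (prod_ideal N1 N2), (prod_part s1 s2); split.
- exact: ideal_prod_ideal.
- exact: directv_prod_ideal.
- exact: prod_ideal_full.
- exact: prod_part_field.
- exact: sum_prod_part.
Qed.

Lemma pac_decomposable_diagonal (R : realType) (V : vectType R) (br : V -> V -> V)
    (G : V * V -> V * V) (k1 k2 : V -> V) :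
  lie_bracket br -> partial_automatic_continuity br -> lie_ring_aut (prod_bracket br) G ->
  lie_ring_aut br k1 -> lie_ring_aut br k2 ->
  (forall p, central (prod_bracket br) (G p - prod_map k1 k2 p)) ->
  pac_decomposable (prod_bracket br) G.
Proof.
move=> br_lie pac G_aut k1_aut k2_aut ZGk.
have [f1 [s1 [f1_aut s1_aut fs1_aut Zk1]]] := pac_mod_center pac k1_aut.
have [f2 [s2 [f2_aut s2_aut fs2_aut Zk2]]] := pac_mod_center pac k2_aut.
apply: (pac_decomposable_mod_center G_aut (lie_ring_aut_prod_map fs1_aut fs2_aut) _
          (lie_alg_aut_prod_map f1_aut f2_aut) (field_aut_prod_map br_lie s1_aut s2_aut)
          (fun=> erefl)) => p.
have /central_prod [Z1 Z2] := ZGk p; apply/central_prod; split => /=.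
  by rewrite -(subrK (k1 p.1) (G p).1) -addrA; apply: (centralD br_lie) Z1 (Zk1 _).
by rewrite -(subrK (k2 p.2) (G p).2) -addrA; apply: (centralD br_lie) Z2 (Zk2 _).
Qed.

Section AutomorphismsOfSquare.
Variables (R : realType) (V : vectType R) (br : V -> V -> V).
Hypotheses (br_lie : lie_bracket br) (br_nonsingular : nonsingular br).
Variables x0 y0 : V.
Hypothesis x0y0_neq0 : br x0 y0 != 0.
Local Notation pb := (prod_bracket br).
Implicit Type G : V * V -> V * V.

Lemma x0_not_central : ~ central br x0.
Proof. by move=> Zx0; move: x0y0_neq0; rewrite Zx0 eqxx. Qed.

Lemma aut_x0_not_central G : lie_ring_aut pb G -> ~ central pb (G (x0, 0)).
Proof.
move=> G_aut /(central_lie_ring_aut G_aut) /central_prod [Zx0 _].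
exact: x0_not_central.
Qed.

(* Otherwise ad G (x0, 0) would be onto [N, N] (+) [N, N], which puts
   G (0, [x0, y0]) into G ([x0, N] (+) 0). *)
Lemma aut_x0_central_component G : lie_ring_aut pb G ->
  ~ central br (G (x0, 0)).1 -> central br (G (x0, 0)).2.
Proof.
move=> G_aut nZ1; apply: NNPP => nZ2.
have [z1 z1E] := br_nonsingular nZ1 (derived_br br (G (0, x0)).1 (G (0, y0)).1).
have [z2 z2E] := br_nonsingular nZ2 (derived_br br (G (0, x0)).2 (G (0, y0)).2).
have [w wE] := lie_ring_aut_surj G_aut (z1, z2).
have : G (0, br x0 y0) = G (br x0 w.1, 0).
  rewrite -[(br x0 w.1, 0)](prod_bracket_inl br_lie) -(prod_bracket_r br_lie).
  by rewrite !(lie_ring_aut_br G_aut) wE /prod_bracket /= z1E z2E.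
move/(lie_ring_aut_inj G_aut)/(congr1 snd) => /= x0y0_0.
by move: x0y0_neq0; rewrite x0y0_0 eqxx.
Qed.

Section NonCentralFirstComponent.
Variable G : V * V -> V * V.
Hypothesis G_aut : lie_ring_aut pb G.
Hypothesis G_x0 : ~ central br (G (x0, 0)).1.

Let G_br := lie_ring_aut_br G_aut.

Lemma aut_inl_derived_snd d : derived br d -> (G (d, 0)).2 = 0.
Proof.
move=> /(br_nonsingular x0_not_central) [y <-].
by rewrite -(prod_bracket_l br_lie) G_br /prod_bracket /= aut_x0_central_component.
Qed.

Lemma aut_inl_central_snd X : central br (G (X, 0)).2.
Proof.
apply: NNPP => nZ; have [z zE] := br_nonsingular nZ (derived_br br x0 y0).
have [w wE] := lie_ring_aut_surj G_aut (0, z).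
have : (G (br X w.1, 0)).2 = br x0 y0.
  by rewrite -[(br _ w.1, 0)](prod_bracket_inl br_lie) G_br wE /prod_bracket /= zE.
by rewrite (aut_inl_derived_snd (derived_br br X w.1)) => /esym/eqP; apply/negP.
Qed.

Lemma aut_inl_derived_preimage d :
  derived br d -> exists2 d', derived br d' & G (d', 0) = (d, 0).
Proof.
move=> /(br_nonsingular G_x0) [y yE]; have [w wE] := lie_ring_aut_surj G_aut (y, 0).
exists (br x0 w.1); first exact: derived_br.
rewrite -[(br _ w.1, 0)](prod_bracket_inl br_lie) G_br wE.
by rewrite /prod_bracket /= yE (br0r br_lie).
Qed.

Lemma aut_inr_central_fst_x0 : central br (G (0, x0)).1.
Proof.
apply: NNPP => nZ.
have D1 : derived br (G (br x0 y0, 0)).1.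
  by rewrite -(prod_bracket_l br_lie) G_br; apply: derived_br.
have [y yE] := br_nonsingular nZ D1; have [w wE] := lie_ring_aut_surj G_aut (y, 0).
have : G (0, br x0 w.2) = G (br x0 y0, 0).
  rewrite -[(0, br x0 w.2)](prod_bracket_inr br_lie) G_br wE.
  rewrite /prod_bracket /= yE (br0r br_lie).
  by apply: injective_projections; rewrite //= (aut_inl_derived_snd (derived_br br x0 y0)).
move/(lie_ring_aut_inj G_aut)/(congr1 fst) => /= x0y0_0.
by move: x0y0_neq0; rewrite -x0y0_0 eqxx.
Qed.

End NonCentralFirstComponent.

Lemma swap_conj_x0_not_central G : lie_ring_aut pb G ->
  ~ central br (G (x0, 0)).1 -> ~ central br ((swap_pair \o G \o swap_pair) (x0, 0)).1.
Proof.
move=> G_aut G_x0 Z2.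
apply: (aut_x0_not_central (lie_ring_aut_comp G_aut (lie_ring_aut_swap_pair br))).
by apply/central_prod; split => //; apply: aut_inr_central_fst_x0.
Qed.

Lemma aut_inr_central_fst G : lie_ring_aut pb G ->
  ~ central br (G (x0, 0)).1 -> forall Y, central br (G (0, Y)).1.
Proof.
move=> G_aut G_x0 Y.
exact: (aut_inl_central_snd (lie_ring_aut_swap_conj G_aut)
                            (swap_conj_x0_not_central G_aut G_x0)).
Qed.

Lemma aut_inl_fst_correction G : lie_ring_aut pb G -> ~ central br (G (x0, 0)).1 ->
  exists2 k, lie_ring_aut br k & forall X, central br ((G (X, 0)).1 - k X).
Proof.
move=> G_aut G_x0; have G_br := lie_ring_aut_br G_aut.
have G_inlD X Y : G (X + Y, 0) = G (X, 0) + G (Y, 0).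
  rewrite -(lie_ring_autD G_aut); congr G.
  by apply: injective_projections; rewrite /= ?addr0.
apply: (central_correction br_lie br_nonsingular x0_not_central).
- by move=> X Y; rewrite G_inlD.
- by move=> X Y; rewrite -(prod_bracket_l br_lie) G_br.
- move=> c Zc; have Zc0 : central pb (c, 0).
    by apply/central_prod; split=> //; apply: central0.
  by have /central_prod [] := lie_ring_aut_central G_aut Zc0.
- move=> X Z1.
  have /(central_lie_ring_aut G_aut) /central_prod [] // : central pb (G (X, 0)).
  by apply/central_prod; split => //; apply: aut_inl_central_snd.
- move=> y; have [p pE] := lie_ring_aut_surj G_aut (y, 0).
  have := congr1 fst pE; rewrite (pair_split p) (lie_ring_autD G_aut) /= => <-.
  by exists p.1; rewrite addrC addKr; apply: aut_inr_central_fst.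
- move=> d Dd Gd1; have Gd : G (d, 0) = G 0.
    rewrite (lie_ring_aut0 G_aut); apply: injective_projections => //=.
    exact: aut_inl_derived_snd.
  by have /(congr1 fst) := lie_ring_aut_inj G_aut Gd.
- move=> d /(aut_inl_derived_preimage G_aut G_x0) [d' Dd' Gd']; exists d' => //.
  by rewrite Gd'.
Qed.

Lemma aut_diagonal_mod_center G : lie_ring_aut pb G -> ~ central br (G (x0, 0)).1 ->
  exists k1 k2, [/\ lie_ring_aut br k1, lie_ring_aut br k2 &
                    forall p, central pb (G p - prod_map k1 k2 p)].
Proof.
move=> G_aut G_x0; have [k1 k1_aut Zk1] := aut_inl_fst_correction G_aut G_x0.
have [k2 k2_aut Zk2] := aut_inl_fst_correction (lie_ring_aut_swap_conj G_aut)
                                               (swap_conj_x0_not_central G_aut G_x0).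
exists k1, k2; split => // p; apply/central_prod.
have -> : G p = G (p.1, 0) + G (0, p.2) by rewrite {1}(pair_split p) (lie_ring_autD G_aut).
split => /=.
  by rewrite addrAC; apply: (centralD br_lie) (Zk1 _) (aut_inr_central_fst G_aut G_x0 _).
by rewrite -addrA; apply: (centralD br_lie) (aut_inl_central_snd G_aut G_x0 _) (Zk2 _).
Qed.

End AutomorphismsOfSquare.

Theorem proposition3p5 (R : realType) (V : vectType R) (br : V -> V -> V) :
  lie_bracket br -> two_step_nilpotent br -> nonsingular br ->
  partial_automatic_continuity br ->
  partial_automatic_continuity (prod_bracket br).
Proof.
move=> br_lie [_ [x0 [y0 x0y0_neq0]]] br_nonsingular pac G G_aut.
have decomp H : lie_ring_aut (prod_bracket br) H -> ~ central br (H (x0, 0)).1 ->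
    pac_decomposable (prod_bracket br) H.
  move=> H_aut H_x0; have [k1 [k2 [k1_aut k2_aut ZHk]]] :=
    aut_diagonal_mod_center br_lie br_nonsingular x0y0_neq0 H_aut H_x0.
  exact: pac_decomposable_diagonal br_lie pac H_aut k1_aut k2_aut ZHk.
have [Z1 | nZ1] := classic (central br (G (x0, 0)).1); last exact: decomp.
apply: pac_decomposable_swap; apply: decomp => [|Z2].
  exact: lie_ring_aut_comp (lie_ring_aut_swap_pair br) G_aut.
by apply: (aut_x0_not_central x0y0_neq0 G_aut); apply/central_prod.
Qed.
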